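(* Let $S$ be a Strassen preordered semiring. Then for nonzero $x, y \in S$, the following are equivalent: (1) $f(x) \geq f(y)$ for every monotone semiring homomorphism $f : S \to \mathbb{R}_+$. (2) For every $\varepsilon > 0$, there are $m, n \in \mathbb{N}_{>0}$ and nonzero $z \in S$ such that $m \leq \varepsilon n$ and $n\, z\, x + m\, z \geq n\, z\, y$. (3) For every $\varepsilon > 0$, there are $m, n \in \mathbb{N}_{>0}$ and nonzero $z \in S$ such that $\frac{m}{n} \leq 1 + \varepsilon$ and $m\, z\, x \geq n\, z\, y$. (4) For every $\varepsilon > 0$, there are $k, n \in \mathbb{N}_{>0}$ such that $k \leq \varepsilon n$ and $2^k x^n \geq y^n$. Moreover, if $f(x) > f(y)$ for every monotone semiring homomorphism $f : S \to \mathbb{R}_+$, then there are nonzero $z, w \in S$ with $zx + w \geq zy + w$.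
   Context: A semiring is a set with two commutative monoid structures, addition (neutral element $0$) and multiplication (neutral element $1$), with multiplication distributing over addition; a semiring homomorphism preserves $+$, $\cdot$, $0$ and $1$. A preordered semiring is a semiring $S$ with a preorder $\geq$ such that $x \geq y$ implies $x + z \geq y + z$ and $xz \geq yz$ for all $z \in S$. A semiring homomorphism between preordered semirings is monotone if it preserves the preorder; $\mathbb{R}_+$ carries its usual order. A preordered semiring $S$ with $1 \geq 0$ is Strassen preordered if the unique homomorphism $\mathbb{N} \to S$ is an order embedding (i.e. for $a,b\in\mathbb{N}$, $a \geq b$ in $S$ iff $a \geq b$ in $\mathbb{N}$), and for every nonzero $x \in S$ there is $\ell \in \mathbb{N}$ with $\ell x \geq 1$ and $\ell \geq x$. $\mathbb{N}_{>0}$ denotes the positive integers. *)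

From HB Require Import structures.
From mathcomp Require Import all_boot all_order all_algebra.
From mathcomp Require Export Rstruct.
Set Implicit Arguments. Unset Strict Implicit. Unset Printing Implicit Defensive.
Import Order.TTheory GRing.Theory Num.Theory.
Local Open Scope ring_scope.

Definition preordered_semiring (S : comPzSemiRingType) (ge : S -> S -> Prop) : Prop :=
  [/\ (forall x, ge x x),
      (forall x y z, ge x y -> ge y z -> ge x z),
      (forall x y z, ge x y -> ge (x + z) (y + z)) &
      (forall x y z, ge x y -> ge (x * z) (y * z))].

Definition strassen_preordered (S : comPzSemiRingType) (ge : S -> S -> Prop) : Prop :=
  [/\ preordered_semiring ge,
      ge 1 0,
      (forall a b : nat, ge a%:R b%:R <-> (b <= a)%N) &
      (forall x : S, x != 0 -> exists l : nat, ge (x *+ l) 1 /\ ge l%:R x)].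

Definition monotone_hom (S : comPzSemiRingType) (ge : S -> S -> Prop)
    (f : S -> Rdefinitions.R) : Prop :=
  (forall x, 0 <= f x) /\
  (forall x y, f (x + y) = f x + f y) /\
  (forall x y, f (x * y) = f x * f y) /\
  f 0 = 0 /\ f 1 = 1 /\
  (forall x y, ge x y -> f y <= f x).

From mathcomp Require Import all_boot all_order all_algebra.
From mathcomp Require Import Rstruct.
From mathcomp Require Import boolp classical_sets reals.
From mathcomp Require Import lra ring zify.
Import Order.TTheory GRing.Theory Num.Theory.
Local Open Scope ring_scope.

(** Say that [u] is catalytically above [v] when [z u + w >= z v + w] for some
    [z <> 0] and [w].  If [x] is not catalytically above [y], Zorn's lemma extends
    the catalytic preorder to a cancellative preorder that is maximal among those
    not containing [x >= y].  Maximality forces totality: adjoining [a >= b] or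
    [b >= a] would both create [x >= y], and the two certificates combine into
    one for the preorder itself.  For a total such preorder,
    [f u = sup {p/q | q u >= p}] is a monotone homomorphism into R_+ with
    [f x <= f y].

    So under (1), [N x + 1] is catalytically above [N y]; the Archimedean property
    absorbs the additive catalyst, giving (2).  Absorbing [z m] into [z x] gives
    (3), and taking [b]-th powers with [m/n <= 1 + 1/2b] gives [2 x^b >= y^b] up
    to a catalyst, which large powers absorb, giving (4).  Conversely each of
    (2)-(4) yields (1) by applying homomorphisms, and under the strict version of
    (1) the separation above shows that [x] is catalytically above [y]. *)

Local Notation R := Rdefinitions.R.

Lemma exists_nat_gt (c : R) : exists N : nat, (0 < N)%N /\ c < N%:R.
Proof. by exists (Num.Def.truncn c).+1; split => //; apply: truncnS_gt. Qed.

Lemma exists_ratio_between (a b : R) : a < b -> 0 < b ->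
  exists p q : nat, (0 < q)%N /\ a < p%:R / q%:R < b.
Proof.
move=> hab hb; have [ha|ha] := ltP a 0.
  by exists 0%N, 1%N; rewrite mul0r ha hb.
have hba : 0 < b - a by rewrite subr_gt0.
set q := (Num.Def.truncn ((b - a)^-1)).+1.
have hq : (0 : R) < q%:R by rewrite ltr0n.
have hqba : 1 < q%:R * (b - a).
  by rewrite -ltr_pdivrMr // div1r truncnS_gt.
set p := (Num.Def.truncn (a * q%:R)).+1.
have hp_gt : a * q%:R < p%:R by apply: truncnS_gt.
have hp_le : (p%:R : R) <= a * q%:R + 1.
  by rewrite /p -addn1 natrD lerD2r truncn_le mulr_ge0.
exists p, q; split => //; rewrite ltr_pdivlMr // ltr_pdivrMr // hp_gt /=.
by apply: le_lt_trans hp_le _; nra.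
Qed.

Lemma bernoulli_ineq (t : R) n : 0 <= t -> 1 + n%:R * t <= (1 + t) ^+ n.
Proof.
move=> ht; elim: n => [|n IH]; first by rewrite expr0 mul0r addr0.
have hn : (0 : R) <= n%:R by [].
rewrite exprSr -natr1; nra.
Qed.

Lemma bernoulli_ineq_dual (t : R) n : 0 <= t -> (1 + t) ^+ n * (1 - n%:R * t) <= 1.
Proof.
move=> ht; elim: n => [|n IH]; first by rewrite expr0 mul0r subr0 mul1r.
have hexp : 0 <= (1 + t) ^+ n by apply: exprn_ge0; lra.
have hstep : (1 + t) * (1 - n.+1%:R * t) <= 1 - n%:R * t.
  by rewrite -natr1; have hn : (0 : R) <= n%:R by []; nra.
by rewrite exprSr -mulrA; apply: le_trans IH; apply: ler_wpM2l.
Qed.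

Lemma expn_le_double {m n b : nat} : (0 < n)%N -> (0 < b)%N ->
  m%:R / n%:R <= 1 + 1 / (2 * b%:R) :> R -> (m ^ b <= 2 * n ^ b)%N.
Proof.
move=> hn hb hmn; have hnR : (0 : R) < n%:R by rewrite ltr0n.
have hbR : (0 : R) < b%:R by rewrite ltr0n.
have ht : (0 : R) <= 1 / (2 * b%:R) by rewrite divr_ge0 // mulr_ge0 // ltW.
have hpow : (1 + 1 / (2 * b%:R)) ^+ b <= 2 :> R.
  have := bernoulli_ineq_dual (1 / (2 * b%:R)) b ht.
  have -> : 1 - b%:R * (1 / (2 * b%:R)) = 1 / 2 :> R by field; rewrite gt_eqF.
  lra.
rewrite -(ler_nat R) natrM !natrX.
move: hmn; rewrite ler_pdivrMr // => hmn.
have hle : (m%:R : R) ^+ b <= ((1 + 1 / (2 * b%:R)) * n%:R) ^+ b.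
  apply: lerXn2r => //; rewrite nnegrE //.
  by apply: mulr_ge0; [lra | exact: ltW].
rewrite exprMn in hle; apply: (le_trans hle); apply: ler_wpM2r => //.
by rewrite exprn_ge0 // ltW.
Qed.

Lemma natr_ratioD (p q p' q' : nat) : (0 < q)%N -> (0 < q')%N ->
  (p * q' + p' * q)%:R / (q * q')%:R = p%:R / q%:R + p'%:R / q'%:R :> R.
Proof.
move=> hq hq'; have hq0 : (q%:R : R) != 0 by rewrite pnatr_eq0 -lt0n.
have hq'0 : (q'%:R : R) != 0 by rewrite pnatr_eq0 -lt0n.
by rewrite !natrD !natrM; field; rewrite hq0 hq'0.
Qed.

Lemma natr_ratioM (p q p' q' : nat) : (0 < q)%N -> (0 < q')%N ->
  (p * p')%:R / (q * q')%:R = p%:R / q%:R * (p'%:R / q'%:R) :> R.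
Proof.
move=> hq hq'; have hq0 : (q%:R : R) != 0 by rewrite pnatr_eq0 -lt0n.
have hq'0 : (q'%:R : R) != 0 by rewrite pnatr_eq0 -lt0n.
by rewrite !natrM; field; rewrite hq0 hq'0.
Qed.

Lemma rel_congr {T : Type} {P : T -> T -> Prop} {a b a' b' : T} :
  P a b -> a = a' -> b = b' -> P a' b'.
Proof. by move=> ? <- <-. Qed.

Section StrassenPreorder.

Variables (S : comPzSemiRingType) (ge : S -> S -> Prop).
Hypothesis HS : strassen_preordered ge.

Lemma ge_refl u : ge u u.
Proof. by case: HS => -[]. Qed.

Lemma ge_trans {u v w} : ge u v -> ge v w -> ge u w.
Proof. by case: HS => -[] _ htrans _ _ _ _ _; apply: htrans. Qed.

Lemma ge_addr {u v} c : ge u v -> ge (u + c) (v + c).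
Proof. by case: HS => -[] _ _ haddr _ _ _ _; apply: haddr. Qed.

Lemma ge_mulr {u v} c : ge u v -> ge (u * c) (v * c).
Proof. by case: HS => -[] _ _ _ hmulr _ _ _; apply: hmulr. Qed.

Lemma ge_addl {u v} c : ge u v -> ge (c + u) (c + v).
Proof. by rewrite ![c + _]addrC; apply: ge_addr. Qed.

Lemma ge_mull {u v} c : ge u v -> ge (c * u) (c * v).
Proof. by rewrite ![c * _]mulrC; apply: ge_mulr. Qed.

Lemma ge_natr a b : ge a%:R b%:R <-> (b <= a)%N.
Proof. by case: HS => _ _ hnat _; apply: hnat. Qed.

Lemma ge_archimedean {u : S} : u != 0 -> exists l : nat, ge (u *+ l) 1 /\ ge l%:R u.
Proof. by case: HS => _ _ _ harchi; apply: harchi. Qed.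

Lemma ge_0 u : ge u 0.
Proof. by case: HS => _ h10 _ _; have := ge_mulr u h10; rewrite mul1r mul0r. Qed.

Lemma exists_natr_ge u : exists l : nat, ge l%:R u.
Proof.
have [->|/ge_archimedean [l [_ hl]]] := eqVneq u 0; last by exists l.
by exists 0%N; apply: ge_refl.
Qed.

Lemma not_ge01 : ~ ge 0 1.
Proof. by move/(ge_natr 0 1). Qed.

Lemma one_neq0 : (1 : S) != 0.
Proof. by apply/eqP => h10; apply: not_ge01; rewrite -h10; apply: ge_refl. Qed.

Lemma natr_neq0 n : (0 < n)%N -> n%:R != 0 :> S.
Proof.
move=> hn; apply/eqP => hn0.
have /ge_natr : ge 0%:R n%:R by rewrite hn0; apply: ge_refl.
by rewrite leqNgt hn.
Qed.

Lemma not_ge0 {u : S} : u != 0 -> ~ ge 0 u.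
Proof.
move=> /ge_archimedean [l [hl _]] h0u; apply: not_ge01; apply: ge_trans hl.
by have := ge_mulr (l%:R : S) h0u; rewrite mul0r mulr_natr.
Qed.

Lemma mul_neq0 {u v : S} : u != 0 -> v != 0 -> u * v != 0.
Proof.
move=> /ge_archimedean [l [hu _]] /ge_archimedean [l' [hv _]]; apply/eqP => huv.
apply: not_ge01; have := ge_trans (ge_mulr (v *+ l') hu) (ge_mull 1 hv).
by rewrite mulr1 mulrnAl mulrnAr -mulrnA huv mul0rn.
Qed.

Lemma add_neq0 {u : S} v : u != 0 -> u + v != 0.
Proof.
move=> hu; apply/eqP => huv; apply: (not_ge0 hu).
by rewrite -huv -{2}[u]addr0; apply: ge_addl; apply: ge_0.
Qed.

Lemma ge_add_drop u w : ge (u + w) u.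
Proof. by rewrite -{2}[u]addr0; apply: ge_addl; apply: ge_0. Qed.

Lemma exists_mulrn_ge {z : S} u : z != 0 -> exists k : nat, ge (z *+ k) u.
Proof.
move=> hz; have [l hl] := exists_natr_ge u; have [lz [hz1 _]] := ge_archimedean hz.
exists (lz * l)%N; apply: ge_trans hl.
by have := ge_mulr l%:R hz1; rewrite mul1r mulr_natr mulrnA.
Qed.

Lemma catalyst_mulrn {a b w : S} k : ge (a + w) (b + w) -> ge (a *+ k + w) (b *+ k + w).
Proof.
move=> h; elim: k => [|k IH]; first by rewrite !mulr0n; apply: ge_refl.
have h1 := ge_addl a IH; have h2 := ge_addl (b *+ k) h.
rewrite (_ : a + (b *+ k + w) = b *+ k + (a + w)) in h1; last by ring.
by apply: (rel_congr (ge_trans h1 h2)); rewrite !mulrS; ring.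
Qed.

Lemma not_ge_add w {z : S} : z != 0 -> ~ ge w (z + w).
Proof.
move=> hz h; have [lw hw] := exists_natr_ge w.
have [k hk] := exists_mulrn_ge lw.+1%:R hz.
have := catalyst_mulrn k (rel_congr h (esym (add0r w)) erefl).
rewrite mul0rn add0r => hwk.
have /ge_natr := ge_trans hw (ge_trans hwk (ge_trans (ge_add_drop _ w) hk)).
by rewrite ltnn.
Qed.

Lemma absorb_catalyst {z w u v : S} : z != 0 -> ge (z * u + w) (z * v + w) ->
  exists l : nat, forall k, ge ((z * u) *+ k + z *+ l) ((z * v) *+ k).
Proof.
move=> hz h; have [l hl] := exists_mulrn_ge w hz; exists l => k.
apply: ge_trans (ge_addl _ hl) _; apply: ge_trans (catalyst_mulrn k h) _.
exact: ge_add_drop.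
Qed.

Record cancellative_extension (P : S -> S -> Prop) : Prop := {
  ce_trans : forall u v w, P u v -> P v w -> P u w;
  ce_addr : forall u v c, P u v -> P (u + c) (v + c);
  ce_mulr : forall u v c, P u v -> P (u * c) (v * c);
  ce_of_ge : forall u v, ge u v -> P u v;
  ce_cancel : forall z w u v, z != 0 -> P (z * u + w) (z * v + w) -> P u v;
  ce_nontrivial : ~ P 0 1 }.

Arguments ce_trans {P} _ {u v w}.
Arguments ce_addr {P} _ {u v} c.
Arguments ce_mulr {P} _ {u v} c.
Arguments ce_of_ge {P} _ {u v}.
Arguments ce_cancel {P} _ {z} w {u v}.
Arguments ce_nontrivial {P}.

Section CancellativeExtension.
Context {P : S -> S -> Prop} (hP : cancellative_extension P).

Lemma ce_refl u : P u u.
Proof. exact/(ce_of_ge hP)/ge_refl. Qed.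

Lemma ce_addl {u v} c : P u v -> P (c + u) (c + v).
Proof. by rewrite ![c + _]addrC; apply: ce_addr. Qed.

Lemma ce_mull {u v} c : P u v -> P (c * u) (c * v).
Proof. by rewrite ![c * _]mulrC; apply: ce_mulr. Qed.

Lemma ce_add {a b c d} : P a b -> P c d -> P (a + c) (b + d).
Proof. by move=> hab hcd; apply: (ce_trans hP (ce_addr hP _ hab) (ce_addl _ hcd)). Qed.

Lemma ce_mulrn {u v} n : P u v -> P (u *+ n) (v *+ n).
Proof. by rewrite -[u *+ n]mulr_natr -[v *+ n]mulr_natr; apply: ce_mulr. Qed.

Lemma ce_natr {a b : nat} : P a%:R b%:R -> (b <= a)%N.
Proof.
move=> hab; rewrite leqNgt; apply/negP => ltab.
have ha1 : P a%:R a.+1%:R.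
  by apply: (ce_trans hP hab); apply: (ce_of_ge hP); apply/ge_natr.
apply: (ce_nontrivial hP); apply: (@ce_cancel _ hP 1 a%:R 0 1 one_neq0).
by rewrite !mul1r add0r -mulrS.
Qed.

End CancellativeExtension.

Definition catalytic_ge (u v : S) := exists z w, z != 0 /\ ge (z * u + w) (z * v + w).

Lemma catalytic_ge_cancellative : cancellative_extension catalytic_ge.
Proof.
constructor.
- move=> u v t [z [w [hz h1]]] [z' [w' [hz' h2]]].
  exists (z * z'), (z' * w + z * w'); split; first exact: mul_neq0.
  have h1' := ge_addr (z * w') (ge_mulr z' h1).
  have h2' := ge_addr (z' * w) (ge_mulr z h2).
  rewrite (_ : (z * v + w) * z' + z * w' = (z' * v + w') * z + z' * w) in h1'; last by ring.
  by apply: (rel_congr (ge_trans h1' h2')); ring.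
- move=> u v c [z [w [hz h]]]; exists z, w; split => //.
  by apply: (rel_congr (ge_addr (z * c) h)); ring.
- move=> u v c [z [w [hz h]]]; exists z, (w * c); split => //.
  by apply: (rel_congr (ge_mulr c h)); ring.
- move=> u v h; exists 1, 0; split; first exact: one_neq0.
  by rewrite !mul1r !addr0.
- move=> z0 w0 u v hz0 [z [w [hz h]]]; exists (z * z0), (z * w0 + w).
  by split; [exact: mul_neq0 | apply: (rel_congr h); ring].
- move=> [z [w [hz h]]]; apply: (not_ge_add w hz).
  by apply: (rel_congr h); ring.
Qed.

Definition adjoin_ge (M : S -> S -> Prop) (a b u v : S) :=
  exists z s, z != 0 /\ M (z * u + s * b) (z * v + s * a).

Section Adjoin.
Context {M : S -> S -> Prop} (hM : cancellative_extension M).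

Lemma adjoin_of_rel a b {u v} : M u v -> adjoin_ge M a b u v.
Proof.
move=> huv; exists 1, 0; split; first exact: one_neq0.
by rewrite !mul0r !addr0 !mul1r.
Qed.

Lemma adjoin_ge_adjoined a b : adjoin_ge M a b a b.
Proof. by exists 1, 1; split; [exact: one_neq0 | rewrite !mul1r addrC; apply: ce_refl]. Qed.

Lemma adjoin_trans {a b u v w} :
  adjoin_ge M a b u v -> adjoin_ge M a b v w -> adjoin_ge M a b u w.
Proof.
move=> [z [s [hz h1]]] [z' [s' [hz' h2]]].
exists (z * z'), (s * z' + z * s'); split; first exact: mul_neq0.
have h1' := ce_addr hM (z * s' * b) (ce_mulr hM z' h1).
have h2' := ce_addr hM (z' * s * a) (ce_mulr hM z h2).
rewrite (_ : (z * v + s * a) * z' + z * s' * b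
           = (z' * v + s' * b) * z + z' * s * a) in h1'; last by ring.
by apply: (rel_congr (ce_trans hM h1' h2')); ring.
Qed.

Lemma adjoin_mulr {a b u v} c : adjoin_ge M a b u v -> adjoin_ge M a b (u * c) (v * c).
Proof.
move=> [z [s [hz h]]]; exists z, (s * c); split => //.
by apply: (rel_congr (ce_mulr hM c h)); ring.
Qed.

(* [u >= 0 = 0 * l >= 1 * l >= v] for a natural number [l >= v]. *)
Lemma adjoin_trivial a b u v : adjoin_ge M a b 0 1 -> adjoin_ge M a b u v.
Proof.
move=> h01; have [l hl] := exists_natr_ge v.
have h0l := adjoin_mulr l%:R h01; rewrite mul0r mul1r in h0l.
apply: adjoin_trans (adjoin_of_rel _ _ (ce_of_ge hM (ge_0 u))) _.
exact: adjoin_trans h0l (adjoin_of_rel _ _ (ce_of_ge hM hl)).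
Qed.

Lemma adjoin_cancellative a b :
  ~ adjoin_ge M a b 0 1 -> cancellative_extension (adjoin_ge M a b).
Proof.
move=> n01; constructor => //.
- by move=> u v w; apply: adjoin_trans.
- move=> u v c [z [s [hz h]]]; exists z, s; split => //.
  by apply: (rel_congr (ce_addr hM (z * c) h)); ring.
- by move=> u v c; apply: adjoin_mulr.
- by move=> u v /(ce_of_ge hM); apply: adjoin_of_rel.
- move=> z0 w0 u v hz0 [z [s [hz h]]]; exists (z * z0), s; split.
    exact: mul_neq0.
  by apply: (ce_cancel hM (z * w0) one_neq0); apply: (rel_congr h); ring.
Qed.

(* Scaled suitably, the two certificates add up to one in which [a] and [b]
   appear on both sides and cancel. *)
Lemma adjoin_both {a b u v} :
  adjoin_ge M a b u v -> adjoin_ge M b a u v -> M u v.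
Proof.
move=> [z [s [hz h1]]] [z' [t [hz' h2]]].
have [t0|ht] := eqVneq t 0.
  by move: h2; rewrite t0 !mul0r; apply: (ce_cancel hM 0 hz').
apply: (ce_cancel hM (s * t * a + s * t * b) (add_neq0 (s * z') (mul_neq0 ht hz))).
by apply: (rel_congr (ce_add hM (ce_mulr hM t h1) (ce_mulr hM s h2))); ring.
Qed.

End Adjoin.

Definition maximal_avoiding (M : S -> S -> Prop) (X Y : S) :=
  [/\ cancellative_extension M, ~ M X Y &
      forall M', cancellative_extension M' -> ~ M' X Y ->
        (forall u v, M u v -> M' u v) -> forall u v, M' u v -> M u v].

Lemma maximal_avoiding_total {M X Y} : maximal_avoiding M X Y ->
  forall a b, M a b \/ M b a.
Proof.
case=> hM nXY Mmax.
have adjoinXY a b : ~ M a b -> adjoin_ge M a b X Y.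
  move=> nab; have [//|nadj] := pselect (adjoin_ge M a b X Y).
  have hadj : cancellative_extension (adjoin_ge M a b).
    by apply: (adjoin_cancellative hM) => /(adjoin_trivial hM a b X Y).
  case: nab; apply: (Mmax _ hadj nadj (fun u v => adjoin_of_rel a b)).
  exact: adjoin_ge_adjoined.
move=> a b; have [hab|nab] := pselect (M a b); first by left.
have [hba|nba] := pselect (M b a); first by right.
by case: nXY; apply: (adjoin_both hM (adjoinXY _ _ nab) (adjoinXY _ _ nba)).
Qed.

Lemma chain_union_cancellative (I : Type) (C : I -> S -> S -> Prop) (i0 : I) :
  (forall i, cancellative_extension (C i)) ->
  (forall i j, (forall u v, C i u v -> C j u v) \/ (forall u v, C j u v -> C i u v)) ->
  cancellative_extension (fun u v => exists i, C i u v).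
Proof.
move=> hC Ctot; constructor.
- move=> u v w [i hi] [j hj]; have [Cij|Cji] := Ctot i j.
  + by exists j; apply: (ce_trans (hC j) (Cij _ _ hi) hj).
  + by exists i; apply: (ce_trans (hC i) hi (Cji _ _ hj)).
- by move=> u v c [i hi]; exists i; apply: (ce_addr (hC i) c hi).
- by move=> u v c [i hi]; exists i; apply: (ce_mulr (hC i) c hi).
- by move=> u v huv; exists i0; apply: (ce_of_ge (hC i0) huv).
- by move=> z w u v hz [i hi]; exists i; apply: (ce_cancel (hC i) w hz hi).
- by move=> [i hi]; apply: (ce_nontrivial (hC i) hi).
Qed.

Lemma exists_maximal_avoiding {X Y} : ~ catalytic_ge X Y ->
  exists M, maximal_avoiding M X Y.
Proof.
move=> nXY.
pose T := {M : S -> S -> Prop | cancellative_extension M /\ ~ M X Y}.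
pose le_T (M M' : T) := `[< forall u v, sval M u v -> sval M' u v >].
have t0 : T := exist _ _ (conj catalytic_ge_cancellative nXY).
have [[M [hM nM]] Mmax] : exists M : T, premaximal le_T M.
  apply: (ZL_preorder t0) => [M|M1 M2 M3 /asboolP h12 /asboolP h23|A Atot].
  - by apply/asboolP.
  - by apply/asboolP => u v /h12 /h23.
  have [[M0 AM0]|nA] := pselect (exists M, A M); last first.
    by exists t0 => M AM; case: nA; exists M.
  pose C (i : {M : T | A M}) := sval (sval i).
  have hC : cancellative_extension (fun u v => exists i, C i u v).
    apply: (@chain_union_cancellative _ C (exist _ M0 AM0)) => [i|i j].
      exact: (proj1 (svalP (sval i))).
    by have [/asboolP|/asboolP] := Atot _ _ (svalP i) (svalP j); [left | right].
  have nC : ~ exists i, C i X Y by move=> [i]; apply: (proj2 (svalP (sval i))).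
  exists (exist (fun P => cancellative_extension P /\ ~ P X Y) _ (conj hC nC)).
  by move=> M AM; apply/asboolP => u v hM; exists (exist _ M AM).
exists M; split => // M' hM' nM' MM' u v.
by have /asboolP := Mmax (exist _ M' (conj hM' nM')) (asboolT MM'); apply.
Qed.

Definition ratio_lbs (M : S -> S -> Prop) (u : S) : set R :=
  [set r | exists p q : nat, [/\ (0 < q)%N, r = p%:R / q%:R & M (u *+ q) p%:R]].

Definition ratio_sup (M : S -> S -> Prop) (u : S) : R := sup (ratio_lbs M u).

Section RatioSup.
Context {M : S -> S -> Prop} (hM : cancellative_extension M).

Lemma ratio_lbD {u v p q p' q'} : M (u *+ q) p%:R -> M (v *+ q') p'%:R ->
  M ((u + v) *+ (q * q')) (p * q' + p' * q)%:R.
Proof.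
move=> h1 h2; apply: (rel_congr (ce_add hM (ce_mulrn hM q' h1) (ce_mulrn hM q h2))).
  by rewrite mulrnDl mulrnA [(q * q')%N]mulnC mulrnA.
by rewrite -!mulrnA natrD.
Qed.

Lemma ratio_ubD {u v p q p' q'} : M p%:R (u *+ q) -> M p'%:R (v *+ q') ->
  M (p * q' + p' * q)%:R ((u + v) *+ (q * q')).
Proof.
move=> h1 h2; apply: (rel_congr (ce_add hM (ce_mulrn hM q' h1) (ce_mulrn hM q h2))).
  by rewrite -!mulrnA natrD.
by rewrite mulrnDl mulrnA [(q * q')%N]mulnC mulrnA.
Qed.

Lemma ratio_lbM {u v p q p' q'} : M (u *+ q) p%:R -> M (v *+ q') p'%:R ->
  M ((u * v) *+ (q * q')) (p * p')%:R.
Proof.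
move=> h1 h2; apply: (rel_congr (ce_trans hM (ce_mulr hM (v *+ q') h1) (ce_mull hM p%:R h2))).
  by rewrite mulrnAl mulrnAr -mulrnA mulnC.
by rewrite natrM.
Qed.

Lemma ratio_ubM {u v p q p' q'} : M p%:R (u *+ q) -> M p'%:R (v *+ q') ->
  M (p * p')%:R ((u * v) *+ (q * q')).
Proof.
move=> h1 h2; apply: (rel_congr (ce_trans hM (ce_mulr hM p'%:R h1) (ce_mull hM (u *+ q) h2))).
  by rewrite natrM.
by rewrite mulrnAl mulrnAr -mulrnA mulnC.
Qed.

Lemma ratio_lbs0 u : ratio_lbs M u 0.
Proof.
exists 0%N, 1%N; split => //; first by rewrite mul0r.
exact/(ce_of_ge hM)/ge_0.
Qed.

Lemma ratio_lbs_bounded u : has_ubound (ratio_lbs M u).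
Proof.
have [l hl] := exists_natr_ge u; exists l%:R => _ [p [q [hq -> hup]]].
have hlu : M (l%:R *+ q) (u *+ q) by apply/(ce_mulrn hM)/(ce_of_ge hM).
rewrite -mulrnA in hlu; have := ce_natr hM (ce_trans hM hlu hup).
by rewrite ler_pdivrMr ?ltr0n // -natrM ler_nat.
Qed.

Lemma le_ratio_sup {u p q} : (0 < q)%N -> M (u *+ q) p%:R -> p%:R / q%:R <= ratio_sup M u.
Proof. by move=> hq h; apply: (ub_le_sup (ratio_lbs_bounded u)); exists p, q. Qed.

Lemma ratio_sup_le {u p q} : (0 < q)%N -> M p%:R (u *+ q) -> ratio_sup M u <= p%:R / q%:R.
Proof.
move=> hq hpu; apply: ge_sup; first by exists 0; apply: ratio_lbs0.
move=> _ [p' [q' [hq' -> hup']]].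
have h1 := ce_mulrn hM q' hpu; have h2 := ce_mulrn hM q hup'.
rewrite -!mulrnA in h1; rewrite -!mulrnA [(q' * q)%N]mulnC in h2.
have := ce_natr hM (ce_trans hM h1 h2).
by rewrite ler_pdivrMr ?ltr0n // mulrAC ler_pdivlMr ?ltr0n // -!natrM ler_nat.
Qed.

Lemma ratio_sup_ge0 u : 0 <= ratio_sup M u.
Proof. exact: (ub_le_sup (ratio_lbs_bounded u) (ratio_lbs0 u)). Qed.

Lemma ratio_sup_mono {u v} : M u v -> ratio_sup M v <= ratio_sup M u.
Proof.
move=> huv; apply: ge_sup; first by exists 0; apply: ratio_lbs0.
move=> _ [p [q [hq -> hvp]]]; apply: (le_ratio_sup hq).
exact: (ce_trans hM (ce_mulrn hM q huv) hvp).
Qed.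

Lemma ratio_sup0 : ratio_sup M 0 = 0.
Proof.
apply/eqP; rewrite eq_le ratio_sup_ge0 andbT.
have := @ratio_sup_le 0 0 1 isT; rewrite mul0r; apply.
by rewrite mulr0n; apply: ce_refl.
Qed.

Lemma ratio_sup1 : ratio_sup M 1 = 1.
Proof.
have h := ce_refl hM (1 : S).
have := @ratio_sup_le 1 1 1 isT; have := @le_ratio_sup 1 1 1 isT.
by rewrite mulr1n divr1 => hge hle; apply/eqP; rewrite eq_le hle ?hge.
Qed.

Lemma ratio_supD_ge u v : ratio_sup M u + ratio_sup M v <= ratio_sup M (u + v).
Proof.
have hsum r1 r2 : ratio_lbs M u r1 -> ratio_lbs M v r2 -> r1 + r2 <= ratio_sup M (u + v).
  move=> [p [q [hq -> h1]]] [p' [q' [hq' -> h2]]]; rewrite -natr_ratioD //.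
  by apply: le_ratio_sup (ratio_lbD h1 h2); rewrite muln_gt0 hq hq'.
have hu r2 : ratio_lbs M v r2 -> ratio_sup M u <= ratio_sup M (u + v) - r2.
  move=> hr2; apply: ge_sup; first by exists 0; apply: ratio_lbs0.
  by move=> r1 hr1; have := hsum _ _ hr1 hr2; lra.
have hv : ratio_sup M v <= ratio_sup M (u + v) - ratio_sup M u.
  apply: ge_sup; first by exists 0; apply: ratio_lbs0.
  by move=> r2 hr2; have := hu _ hr2; lra.
lra.
Qed.

Hypothesis Mtot : forall a b, M a b \/ M b a.

Lemma lt_ratio_sup {u p q} : (0 < q)%N -> p%:R / q%:R < ratio_sup M u -> M (u *+ q) p%:R.
Proof.
move=> hq hlt; have [//|hpu] := Mtot (u *+ q) p%:R.
by have := ratio_sup_le hq hpu; rewrite leNgt hlt.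
Qed.

Lemma ratio_sup_lt {u p q} : (0 < q)%N -> ratio_sup M u < p%:R / q%:R -> M p%:R (u *+ q).
Proof.
move=> hq hlt; have [hup|//] := Mtot (u *+ q) p%:R.
by have := le_ratio_sup hq hup; rewrite leNgt hlt.
Qed.

Lemma ratio_supD_le u v : ratio_sup M (u + v) <= ratio_sup M u + ratio_sup M v.
Proof.
rewrite leNgt; apply/negP => hlt.
have hu := ratio_sup_ge0 u; have hv := ratio_sup_ge0 v.
set e := (ratio_sup M (u + v) - ratio_sup M u - ratio_sup M v) / 2.
have he : 2 * e = ratio_sup M (u + v) - ratio_sup M u - ratio_sup M v by rewrite /e; lra.
have [p1 [q1 [hq1 /andP[l1 r1]]]] :=
  exists_ratio_between (ratio_sup M u) (ratio_sup M u + e) ltac:(lra) ltac:(lra).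
have [p2 [q2 [hq2 /andP[l2 r2]]]] :=
  exists_ratio_between (ratio_sup M v) (ratio_sup M v + e) ltac:(lra) ltac:(lra).
have hq : (0 < q1 * q2)%N by rewrite muln_gt0 hq1 hq2.
have := ratio_sup_le hq (ratio_ubD (ratio_sup_lt hq1 l1) (ratio_sup_lt hq2 l2)).
by rewrite natr_ratioD //; lra.
Qed.

Lemma ratio_supM_le u v : ratio_sup M (u * v) <= ratio_sup M u * ratio_sup M v.
Proof.
have hu := ratio_sup_ge0 u; have hv := ratio_sup_ge0 v.
rewrite leNgt; apply/negP => hlt.
set e := (ratio_sup M (u * v) - ratio_sup M u * ratio_sup M v) / (ratio_sup M v + 1).
have hv1 : 0 < ratio_sup M v + 1 by lra.
have he : 0 < e by rewrite /e divr_gt0 // subr_gt0.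
have he2 : e * (ratio_sup M v + 1) = ratio_sup M (u * v) - ratio_sup M u * ratio_sup M v.
  by rewrite /e mulfVK // gt_eqF.
have [p1 [q1 [hq1 /andP[l1 r1]]]] :=
  exists_ratio_between (ratio_sup M u) (ratio_sup M u + e) ltac:(lra) ltac:(lra).
set x1 := p1%:R / q1%:R in l1 r1.
have hx1 : 0 < x1 by lra.
have hx1v : x1 * ratio_sup M v < ratio_sup M (u * v).
  have : x1 * ratio_sup M v <= (ratio_sup M u + e) * ratio_sup M v.
    by apply: ler_wpM2r => //; lra.
  nra.
have huv : 0 < ratio_sup M (u * v) by nra.
have [p2 [q2 [hq2 /andP[l2 r2]]]] :=
  exists_ratio_between (ratio_sup M v) (ratio_sup M (u * v) / x1)
    ltac:(by rewrite ltr_pdivlMr // mulrC) ltac:(by rewrite divr_gt0).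
have hq : (0 < q1 * q2)%N by rewrite muln_gt0 hq1 hq2.
have := ratio_sup_le hq (ratio_ubM (ratio_sup_lt hq1 l1) (ratio_sup_lt hq2 l2)).
rewrite natr_ratioM // -/x1; move: r2; rewrite ltr_pdivlMr //.
lra.
Qed.

Lemma ratio_supM_ge u v : ratio_sup M u * ratio_sup M v <= ratio_sup M (u * v).
Proof.
have hu := ratio_sup_ge0 u; have hv := ratio_sup_ge0 v.
have huv := ratio_sup_ge0 (u * v).
rewrite leNgt; apply/negP => hlt.
have hu0 : 0 < ratio_sup M u by nra.
have hv0 : 0 < ratio_sup M v by nra.
have [p1 [q1 [hq1 /andP[l1 r1]]]] :=
  exists_ratio_between (ratio_sup M (u * v) / ratio_sup M v) (ratio_sup M u)
    ltac:(by rewrite ltr_pdivrMr) hu0.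
set x1 := p1%:R / q1%:R in l1 r1.
have hx1 : 0 < x1 by apply: le_lt_trans l1; rewrite divr_ge0.
move: l1; rewrite ltr_pdivrMr // => l1.
have [p2 [q2 [hq2 /andP[l2 r2]]]] :=
  exists_ratio_between (ratio_sup M (u * v) / x1) (ratio_sup M v)
    ltac:(rewrite ltr_pdivrMr //; lra) hv0.
have hq : (0 < q1 * q2)%N by rewrite muln_gt0 hq1 hq2.
have := le_ratio_sup hq (ratio_lbM (lt_ratio_sup hq1 r1) (lt_ratio_sup hq2 r2)).
rewrite natr_ratioM // -/x1; move: l2; rewrite ltr_pdivrMr //.
lra.
Qed.

Lemma ratio_sup_monotone_hom : monotone_hom ge (ratio_sup M).
Proof.
split; first exact: ratio_sup_ge0.
split; first by move=> u v; apply/eqP; rewrite eq_le ratio_supD_le ratio_supD_ge.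
split; first by move=> u v; apply/eqP; rewrite eq_le ratio_supM_le ratio_supM_ge.
split; first exact: ratio_sup0.
split; first exact: ratio_sup1.
by move=> u v /(ce_of_ge hM); apply: ratio_sup_mono.
Qed.

End RatioSup.

Lemma separating_hom {X Y} : ~ catalytic_ge X Y ->
  exists f, monotone_hom ge f /\ f X <= f Y.
Proof.
move=> nXY; have [M hmax] := exists_maximal_avoiding nXY.
have [hM nM _] := hmax; have Mtot := maximal_avoiding_total hmax.
exists (ratio_sup M); split; first exact: ratio_sup_monotone_hom.
by have [//|hYX] := Mtot X Y; apply: ratio_sup_mono.
Qed.

Section MonotoneHom.
Context {f : S -> R} (hf : monotone_hom ge f).

Lemma hom_ge0 u : 0 <= f u.
Proof. by case: hf. Qed.

Lemma hom_add u v : f (u + v) = f u + f v.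
Proof. by case: hf => _ []. Qed.

Lemma hom_mul u v : f (u * v) = f u * f v.
Proof. by case: hf => _ [_ []]. Qed.

Lemma hom0 : f 0 = 0.
Proof. by case: hf => _ [_ [_ []]]. Qed.

Lemma hom1 : f 1 = 1.
Proof. by case: hf => _ [_ [_ [_ []]]]. Qed.

Lemma hom_mono {u v} : ge u v -> f v <= f u.
Proof. by case: hf => _ [_ [_ [_ [_ hmono]]]]; apply: hmono. Qed.

Lemma hom_mulrn u n : f (u *+ n) = f u * n%:R.
Proof.
elim: n => [|n IH]; first by rewrite mulr0n hom0 mulr0.
by rewrite mulrS hom_add IH mulrS; ring.
Qed.

Lemma hom_exp u n : f (u ^+ n) = f u ^+ n.
Proof.
elim: n => [|n IH]; first by rewrite !expr0 hom1.
by rewrite !exprS hom_mul IH.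
Qed.

Lemma hom_gt0 {u} : u != 0 -> 0 < f u.
Proof.
move=> /ge_archimedean [l [hl _]]; have := hom_mono hl.
rewrite hom_mulrn hom1 lt_neqAle hom_ge0 andbT => hfl.
by apply/eqP => hu0; move: hfl; rewrite -hu0 mul0r ler10.
Qed.

End MonotoneHom.

Definition spectral_ge (x y : S) :=
  forall f : S -> R, monotone_hom ge f -> f y <= f x.

Definition additive_approx_ge (x y : S) :=
  forall eps : R, 0 < eps ->
    exists m n : nat, exists z : S, [/\ (0 < m)%N, (0 < n)%N, z != 0,
      m%:R <= eps * n%:R & ge ((z * x) *+ n + z *+ m) ((z * y) *+ n)].

Definition ratio_approx_ge (x y : S) :=
  forall eps : R, 0 < eps ->
    exists m n : nat, exists z : S, [/\ (0 < m)%N, (0 < n)%N, z != 0,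
      m%:R / n%:R <= 1 + eps & ge ((z * x) *+ m) ((z * y) *+ n)].

Definition power_approx_ge (x y : S) :=
  forall eps : R, 0 < eps ->
    exists k n : nat, [/\ (0 < k)%N, (0 < n)%N,
      k%:R <= eps * n%:R & ge ((x ^+ n) *+ (2 ^ k)) (y ^+ n)].

Lemma spectral_ge_additive_approx x y : spectral_ge x y -> additive_approx_ge x y.
Proof.
move=> hxy eps heps.
have [N [hN hNeps]] := exists_nat_gt (2 / eps).
have hN2 : 2 <= eps * N%:R by move: hNeps; rewrite ltr_pdivrMr // mulrC => /ltW.
have hcat : catalytic_ge (x *+ N + 1) (y *+ N).
  have [//|ncat] := pselect (catalytic_ge (x *+ N + 1) (y *+ N)).
  have [f [hf]] := separating_hom ncat.
  rewrite (hom_add hf) !(hom_mulrn hf) (hom1 hf).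
  have := hxy f hf; have : (0 : R) < N%:R by rewrite ltr0n.
  nra.
have [z [w [hz hzw]]] := hcat; have [l hl] := absorb_catalyst hz hzw.
exists (l.+1 + l)%N, (N * l.+1)%N, z; split => //.
- by rewrite muln_gt0 hN.
- have hm : ((l.+1 + l)%:R : R) <= 2 * l.+1%:R by rewrite -natrM ler_nat; lia.
  by rewrite natrM mulrA; apply: le_trans hm _; apply: ler_wpM2r.
- by apply: (rel_congr (hl l.+1)); ring.
Qed.

Lemma additive_approx_spectral_ge x y : additive_approx_ge x y -> spectral_ge x y.
Proof.
move=> hxy f hf; rewrite leNgt; apply/negP => hlt.
have [m [n [z [hm hn hz hmn hzxy]]]] := hxy ((f y - f x) / 2) ltac:(lra).
have := hom_mono hf hzxy; rewrite (hom_add hf) !(hom_mulrn hf) !(hom_mul hf) => hfz.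
have hz0 := hom_gt0 hf hz.
have hfn : f y * n%:R <= f x * n%:R + m%:R.
  have : f z * (f y * n%:R) <= f z * (f x * n%:R + m%:R) by nra.
  by rewrite ler_pM2l.
have hn1 : (1 : R) <= n%:R by rewrite ler1n.
nra.
Qed.

(* The catalyst [z m] is absorbed into [z x (l m)], where [l x >= 1]. *)
Lemma additive_ratio_approx x y : x != 0 ->
  additive_approx_ge x y -> ratio_approx_ge x y.
Proof.
move=> hx hxy eps heps.
have [l [hl _]] := ge_archimedean hx.
have hl0 : (0 < l)%N.
  by rewrite lt0n; apply/eqP => l0; move: hl; rewrite l0 mulr0n; apply: not_ge01.
have hlR : (0 : R) < l%:R by rewrite ltr0n.
have [m [n [z [hm hn hz hmn hzxy]]]] := hxy (eps / l%:R) ltac:(by rewrite divr_gt0).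
have hzm : ge ((z * x) *+ (m * l)) (z *+ m).
  by apply: (rel_congr (ge_mulr (m%:R : S) (ge_mull z hl))); ring.
exists (n + m * l)%N, n, z; split => //.
- by rewrite addn_gt0 hn.
- have hnR : (0 : R) < n%:R by rewrite ltr0n.
  rewrite ler_pdivrMr // natrD natrM.
  by move: hmn; rewrite mulrAC ler_pdivlMr // => hmn; lra.
- by rewrite mulrnDr; apply: ge_trans (ge_addl _ hzm) hzxy.
Qed.

Lemma ratio_approx_spectral_ge x y : x != 0 ->
  ratio_approx_ge x y -> spectral_ge x y.
Proof.
move=> hx hxy f hf; rewrite leNgt; apply/negP => hlt.
have hx0 := hom_gt0 hf hx.
have heps : 0 < (f y - f x) / (2 * f x) by rewrite divr_gt0 // ?subr_gt0 // mulr_gt0.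
have [m [n [z [hm hn hz hmn hzxy]]]] := hxy _ heps.
have := hom_mono hf hzxy; rewrite !(hom_mulrn hf) !(hom_mul hf) => hfz.
have hz0 := hom_gt0 hf hz.
have hnR : (0 : R) < n%:R by rewrite ltr0n.
move: hmn; rewrite ler_pdivrMr // => hmn.
have heps_x : f x * ((f y - f x) / (2 * f x)) = (f y - f x) / 2.
  by field; rewrite gt_eqF.
have hfn : f y * n%:R <= f x * m%:R.
  have : f z * (f y * n%:R) <= f z * (f x * m%:R) by nra.
  by rewrite ler_pM2l.
have hfm : f x * m%:R <= f x * ((1 + (f y - f x) / (2 * f x)) * n%:R).
  by rewrite ler_pM2l.
have hn1 : (1 : R) <= n%:R by rewrite ler1n.
nra.
Qed.

Lemma ge_catalyst_expn {z a b : S} j : ge (z * a) (z * b) -> ge (z * a ^+ j) (z * b ^+ j).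
Proof.
move=> hab; elim: j => [|j IH]; first by rewrite !expr0; apply: ge_refl.
have h1 := ge_mull a IH; have h2 := ge_mull (b ^+ j) hab.
rewrite (_ : a * (z * b ^+ j) = b ^+ j * (z * a)) in h1; last by ring.
by apply: (rel_congr (ge_trans h1 h2)); rewrite !exprSr; ring.
Qed.

Lemma cancel_catalyst_expn {z a b : S} : z != 0 -> ge (z * a) (z * b) ->
  exists c : nat, forall j, ge (a ^+ j *+ c) (b ^+ j).
Proof.
move=> hz hab; have [l hl] := exists_natr_ge z; have [l' [hl' _]] := ge_archimedean hz.
exists (l * l')%N => j.
have h1 := ge_mulr (a ^+ j *+ l') hl.
have h2 := ge_mulr (l'%:R : S) (ge_catalyst_expn j hab).
have h3 := ge_mulr (b ^+ j) hl'.
rewrite (_ : z * (a ^+ j *+ l') = z * a ^+ j * l'%:R) in h1; last by ring.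
rewrite (_ : z * b ^+ j * l'%:R = z *+ l' * b ^+ j) in h2; last by ring.
by apply: (rel_congr (ge_trans h1 (ge_trans h2 h3))); ring.
Qed.

(* With [m / n <= 1 + 1/2b], the [b]-th power of [m z x >= n z y] gives
   [2 x^b >= y^b] with catalyst [z n^b], which powers then absorb. *)
Lemma ratio_power_approx x y : ratio_approx_ge x y -> power_approx_ge x y.
Proof.
move=> hxy eps heps.
have [b [hb hbeps]] := exists_nat_gt (2 / eps).
have hb2 : 2 <= eps * b%:R by move: hbeps; rewrite ltr_pdivrMr // mulrC => /ltW.
have hbR : (0 : R) < b%:R by rewrite ltr0n.
have [m [n [z [hm hn hz hmn hzxy]]]] :=
  hxy (1 / (2 * b%:R)) ltac:(by rewrite divr_gt0 // mulr_gt0).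
have hmb := expn_le_double hn hb hmn.
have hZ : z *+ n ^ b != 0.
  by rewrite -mulr_natr; apply: (mul_neq0 hz); apply: natr_neq0; rewrite expn_gt0 hn.
have hZxy : ge (z *+ n ^ b * (x ^+ b *+ 2)) (z *+ n ^ b * y ^+ b).
  have h1 : ge (z * (x *+ m)) (z * (y *+ n)) by rewrite !mulrnAr.
  have h2 := ge_catalyst_expn b h1; rewrite !exprMn_n in h2.
  have h3 : ge (z * (x ^+ b *+ (2 * n ^ b))) (z * (x ^+ b *+ m ^ b)).
    by apply: (rel_congr (ge_mull (z * x ^+ b) (proj2 (ge_natr _ _) hmb))); ring.
  by apply: (rel_congr (ge_trans h3 h2)); ring.
have [c hc] := cancel_catalyst_expn hZ hZxy.
exists (c.+1 + c)%N, (b * c.+1)%N; split => //.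
- by rewrite muln_gt0 hb.
- rewrite natrM mulrA; apply: (@le_trans _ _ (2 * c.+1%:R)).
    by rewrite -natrM ler_nat; lia.
  by apply: ler_wpM2r.
- have := hc c.+1; rewrite exprMn_n -!exprM => hpow; apply: ge_trans hpow.
  have hc2 : (2 ^ c.+1 * c <= 2 ^ (c.+1 + c))%N.
    by rewrite expnD leq_mul2l; apply/orP; right; apply/ltnW/ltn_expl.
  by apply: (rel_congr (ge_mull (x ^+ (b * c.+1)) (proj2 (ge_natr _ _) hc2))); ring.
Qed.

Lemma power_approx_spectral_ge x y : x != 0 ->
  power_approx_ge x y -> spectral_ge x y.
Proof.
move=> hx hxy f hf; rewrite leNgt; apply/negP => hlt.
have hx0 := hom_gt0 hf hx.
have [r hr] : exists r, r = f y / f x by exists (f y / f x).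
have hr1 : 1 < r by rewrite hr ltr_pdivlMr // mul1r.
have hfy : f y = r * f x by rewrite hr mulfVK // gt_eqF.
have [N [hN hNr]] := exists_nat_gt (1 / (r - 1)).
have hNR : (0 : R) < N%:R by rewrite ltr0n.
have hN1 : 1 < N%:R * (r - 1) by move: hNr; rewrite ltr_pdivrMr ?subr_gt0 // mulrC.
have [k [n [hk hn hkn hxyn]]] := hxy (1 / N%:R) ltac:(by rewrite divr_gt0).
have := hom_mono hf hxyn; rewrite (hom_mulrn hf) !(hom_exp hf) hfy exprMn natrX => hfn.
have hrn : r ^+ n <= 2 ^+ k.
  by move: hfn; rewrite [_ * 2 ^+ k]mulrC ler_pM2r // exprn_gt0.
have hkN : (k * N <= n)%N.
  by rewrite -(ler_nat R) natrM; move: hkn; rewrite div1r mulrC ler_pdivlMr.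
have hrN : 2 < r ^+ N.
  have := @bernoulli_ineq (r - 1) N ltac:(lra).
  by rewrite (_ : 1 + (r - 1) = r); [lra | ring].
have h2r : 2 ^+ k < r ^+ (k * N) by rewrite mulnC exprM ltrXn2r // -lt0n.
have hrkn : r ^+ (k * N) <= r ^+ n by rewrite ler_eXn2l.
by have := lt_le_trans h2r (le_trans hrkn hrn); rewrite ltxx.
Qed.

Lemma spectral_gt_catalytic x y :
  (forall f : S -> R, monotone_hom ge f -> f y < f x) ->
  exists z w : S, [/\ z != 0, w != 0 & ge (z * x + w) (z * y + w)].
Proof.
move=> hxy; have [[z [w [hz hzw]]]|ncat] := pselect (catalytic_ge x y); last first.
  by have [f [hf]] := separating_hom ncat; rewrite leNgt hxy.
have [w0|hw] := eqVneq w 0; last by exists z, w.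
by exists z, z; split => //; apply: ge_addr; move: hzw; rewrite w0 !addr0.
Qed.

End StrassenPreorder.

Theorem corollary2p18 (S : comPzSemiRingType) (ge : S -> S -> Prop)
  (HS : strassen_preordered ge) (x y : S) (hx : x != 0) (hy : y != 0) :
  let P1 := forall f : S -> Rdefinitions.R, monotone_hom ge f -> f y <= f x in
  let P2 := forall eps : Rdefinitions.R, 0 < eps ->
      exists m n : nat, exists z : S, [/\ (0 < m)%N, (0 < n)%N, z != 0,
        m%:R <= eps * n%:R & ge ((z * x) *+ n + z *+ m) ((z * y) *+ n)] in
  let P3 := forall eps : Rdefinitions.R, 0 < eps ->
      exists m n : nat, exists z : S, [/\ (0 < m)%N, (0 < n)%N, z != 0,
        m%:R / n%:R <= 1 + eps & ge ((z * x) *+ m) ((z * y) *+ n)] in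
  let P4 := forall eps : Rdefinitions.R, 0 < eps ->
      exists k n : nat, [/\ (0 < k)%N, (0 < n)%N,
        k%:R <= eps * n%:R & ge ((x ^+ n) *+ (2 ^ k)) (y ^+ n)] in
  [/\ P1 <-> P2, P1 <-> P3, P1 <-> P4 &
      ((forall f : S -> Rdefinitions.R, monotone_hom ge f -> f y < f x) ->
        exists z w : S, [/\ z != 0, w != 0 & ge (z * x + w) (z * y + w)])].
Proof.
move=> P1 P2 P3 P4.
have h12 : P1 -> P2 := @spectral_ge_additive_approx S ge HS x y.
have h21 : P2 -> P1 := @additive_approx_spectral_ge S ge HS x y.
have h23 : P2 -> P3 := @additive_ratio_approx S ge HS x y hx.
have h31 : P3 -> P1 := @ratio_approx_spectral_ge S ge HS x y hx.
have h34 : P3 -> P4 := @ratio_power_approx S ge HS x y.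
have h41 : P4 -> P1 := @power_approx_spectral_ge S ge HS x y hx.
by split; [tauto | tauto | tauto | exact: spectral_gt_catalytic].
Qed.
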